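(* Let $f:[0,\infty)\to\mathbb{R}$ be differentiable, let $0<a<b<\infty$, and suppose $f'$ is Lebesgue integrable on $[a,b]$. Let $m\in(0,1]$ and $q>1$, and suppose $|f'|^q$ is $(1,m)$-GA-convex on $[0,\max\{a^{1/m},b\}]$. Then \[ \biggl|\frac{b^2f(b)-a^2f(a)}{2}-\int_a^b xf(x)\,dx\biggr|\le\frac{\ln b-\ln a}{2^{1+1/q}}\bigl[L\bigl(a^{3q/(q-1)},b^{3q/(q-1)}\bigr)\bigr]^{1-1/q}\Bigl[|f'(b)|^q+m\bigl|f'(a^{1/m})\bigr|^q\Bigr]^{1/q}. \]
   Context: For $c>0$, $h:[0,c]\to\mathbb{R}$ and $(\alpha,m)\in(0,1]^2$, $h$ is called $(\alpha,m)$-GA-convex on $[0,c]$ if $h\bigl(x^\lambda y^{m(1-\lambda)}\bigr)\le\lambda^\alpha h(x)+m(1-\lambda^\alpha)h(y)$ for all $x,y\in[0,c]$ and all $\lambda\in[0,1]$ (with the convention $0^0=1$). For $x,y>0$, $x\neq y$, the logarithmic mean is $L(x,y)=\frac{y-x}{\ln y-\ln x}$. *)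

From Stdlib Require Import Reals Lra.
Open Scope R_scope.

(* Real power x^y for x >= 0, with the conventions 0^0 = 1 and 0^y = 0 for y <> 0
   (Stdlib's Rpower is only meaningful for x > 0). *)
Definition rpow (x y : R) : R :=
  if Req_EM_T x 0 then (if Req_EM_T y 0 then 1 else 0) else Rpower x y.

Definition GA_convex (alpha m c : R) (h : R -> R) : Prop :=
  forall x y lam, 0 <= x <= c -> 0 <= y <= c -> 0 <= lam <= 1 ->
    h (rpow x lam * rpow y (m * (1 - lam)))
      <= rpow lam alpha * h x + m * (1 - rpow lam alpha) * h y.

Definition logmean (x y : R) : R := (y - x) / (ln y - ln x).

Definition right_derivative (f : R -> R) (x l : R) : Prop :=
  forall eps, 0 < eps -> exists delta, 0 < delta /\
    forall h, 0 < h < delta -> Rabs ((f (x + h) - f x) / h - l) < eps.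

From Stdlib Require Import Reals Lra.
From Coquelicot Require Import Coquelicot.
Open Scope R_scope.

(* Put [g(x) = x^2 f(x) - 2 int_a^x t f(t) dt]; since
   [g'(x) = x^2 f'(x)], the left-hand side is [|g(b) - g(a)| / 2].  With
   [lambda(x) = ln(x/a) / ln(b/a)] one has [x = b^lambda (a^(1/m))^(m(1-lambda))],
   so GA-convexity bounds [|f'(x)|^q] by [lambda A + (1 - lambda) m B], where
   [A = |f'(b)|^q] and [B = |f'(a^(1/m))|^q].  Writing
   [x^2 |f'(x)| = x^(3 - 1/p) . |f'(x)| x^(-1/q)] with [p = q/(q-1)], Hoelder's
   inequality for [dx/x] gives the bound, the two factors integrating to
   [(b^s - a^s)/s] ([s = 3p]) and [ln(b/a) (A + m B)/2]. *)

Lemma rpow_pos x y : 0 < x -> rpow x y = Rpower x y.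
Proof. intros Hx; unfold rpow; destruct (Req_EM_T x 0); [lra | reflexivity]. Qed.

Lemma rpow_0 y : y <> 0 -> rpow 0 y = 0.
Proof.
  intros Hy; unfold rpow.
  destruct (Req_EM_T 0 0); [|lra]; destruct (Req_EM_T y 0); [lra | reflexivity].
Qed.

Lemma Rpower_pos x y : 0 < Rpower x y.
Proof. apply exp_pos. Qed.

Lemma rpow_ge0 x y : 0 <= x -> 0 <= rpow x y.
Proof.
  intros Hx; unfold rpow; destruct (Req_EM_T x 0).
  - destruct (Req_EM_T y 0); lra.
  - left; apply Rpower_pos.
Qed.

Lemma Rpower_div x y r : 0 < x -> 0 < y -> Rpower (x / y) r = Rpower x r / Rpower y r.
Proof.
  intros Hx Hy; unfold Rpower, Rdiv.
  rewrite ln_mult, ln_Rinv, <- exp_Ropp, <- exp_plus by (try apply Rinv_0_lt_compat; lra).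
  f_equal; ring.
Qed.

Lemma rpow_div_pos x y r : 0 <= x -> 0 < y -> r <> 0 ->
  rpow (x / y) r = rpow x r / Rpower y r.
Proof.
  intros Hx Hy Hr; destruct (Req_EM_T x 0) as [->|Hx0].
  - unfold Rdiv; rewrite Rmult_0_l, rpow_0 by exact Hr; ring.
  - rewrite !rpow_pos by (try apply Rdiv_lt_0_compat; lra); apply Rpower_div; lra.
Qed.

Lemma Rpower_root x r : 0 < x -> r <> 0 -> Rpower (Rpower x (1 / r)) r = x.
Proof.
  intros Hx Hr; rewrite Rpower_mult.
  replace (1 / r * r) with 1 by (field; exact Hr); apply Rpower_1, Hx.
Qed.

(* Convexity of [exp], from the tangent-line bound [1 + u <= exp u]. *)
Lemma exp_convex t X Y : 0 <= t <= 1 ->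
  exp (t * X + (1 - t) * Y) <= t * exp X + (1 - t) * exp Y.
Proof.
  intros Ht; set (M := t * X + (1 - t) * Y).
  assert (EX : exp X = exp M * exp (X - M)) by (rewrite <- exp_plus; f_equal; ring).
  assert (EY : exp Y = exp M * exp (Y - M)) by (rewrite <- exp_plus; f_equal; ring).
  pose proof (exp_ineq1_le (X - M)); pose proof (exp_ineq1_le (Y - M)).
  pose proof (exp_pos M).
  rewrite EX, EY.
  assert (t * (exp M * (1 + (X - M))) <= t * (exp M * exp (X - M)))
    by (apply Rmult_le_compat_l; [lra | apply Rmult_le_compat_l; lra]).
  assert ((1 - t) * (exp M * (1 + (Y - M))) <= (1 - t) * (exp M * exp (Y - M)))
    by (apply Rmult_le_compat_l; [lra | apply Rmult_le_compat_l; lra]).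
  assert (t * (exp M * (1 + (X - M))) + (1 - t) * (exp M * (1 + (Y - M))) = exp M)
    by (unfold M; ring).
  lra.
Qed.

Lemma young p q x y : 0 < p -> 0 < q -> 1 / p + 1 / q = 1 -> 0 <= x -> 0 <= y ->
  x * y <= rpow x p / p + rpow y q / q.
Proof.
  intros Hp Hq Hpq Hx Hy.
  assert (Hp' : 0 < 1 / p) by (apply Rdiv_lt_0_compat; lra).
  assert (Hq' : 0 < 1 / q) by (apply Rdiv_lt_0_compat; lra).
  assert (Hrhs : 0 <= rpow x p / p + rpow y q / q).
  { pose proof (rpow_ge0 x p Hx); pose proof (rpow_ge0 y q Hy).
    unfold Rdiv; apply Rplus_le_le_0_compat; apply Rmult_le_pos;
      try (left; apply Rinv_0_lt_compat); lra. }
  destruct (Req_EM_T x 0) as [->|Hx0]; [rewrite Rmult_0_l; exact Hrhs|].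
  destruct (Req_EM_T y 0) as [->|Hy0]; [rewrite Rmult_0_r; exact Hrhs|].
  rewrite !rpow_pos by lra.
  replace (x * y) with (exp (1 / p * (p * ln x) + (1 - 1 / p) * (q * ln y))).
  - eapply Rle_trans; [apply exp_convex; lra|].
    unfold Rpower; replace (1 - 1 / p) with (1 / q) by lra; unfold Rdiv; lra.
  - replace (1 / p * (p * ln x) + (1 - 1 / p) * (q * ln y)) with (ln x + ln y)
      by (replace (1 - 1 / p) with (1 / q) by lra; field; lra).
    rewrite exp_plus, !exp_ln; lra.
Qed.

(* Comparison principle: if [|g'| <= G'] on [a,b] then the increment of [g]
   is dominated by that of [G] (two applications of the mean value theorem). *)
Lemma increment_le_increment g G g' G' a b : a < b ->
  (forall c, a <= c <= b -> derivable_pt_lim g c (g' c)) ->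
  (forall c, a <= c <= b -> derivable_pt_lim G c (G' c)) ->
  (forall c, a <= c <= b -> Rabs (g' c) <= G' c) ->
  Rabs (g b - g a) <= G b - G a.
Proof.
  intros Hab Hg HG Hbound.
  destruct (MVT_cor2 (fun x => G x - g x) (fun x => G' x - g' x) a b Hab)
    as [c1 [E1 Hc1]]; [intros c Hc; apply derivable_pt_lim_minus; auto|].
  destruct (MVT_cor2 (fun x => G x + g x) (fun x => G' x + g' x) a b Hab)
    as [c2 [E2 Hc2]]; [intros c Hc; apply derivable_pt_lim_plus; auto|].
  pose proof (proj1 (Rabs_le_between _ _) (Hbound c1 ltac:(lra))).
  pose proof (proj1 (Rabs_le_between _ _) (Hbound c2 ltac:(lra))).
  assert (0 <= (G' c1 - g' c1) * (b - a)) by (apply Rmult_le_pos; lra).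
  assert (0 <= (G' c2 + g' c2) * (b - a)) by (apply Rmult_le_pos; lra).
  apply Rabs_le; lra.
Qed.

(* The dominating
   primitive is [U V (P/(p DP) + Q/(q DQ))], whose derivative bounds
   [alpha beta] by Young's inequality applied to [alpha/U] and [beta/V]. *)
Lemma holder_by_primitives g P Q g' P' Q' alpha beta a b p q :
  a < b -> 0 < p -> 0 < q -> 1 / p + 1 / q = 1 ->
  (forall c, a <= c <= b -> derivable_pt_lim g c (g' c)) ->
  (forall c, a <= c <= b -> derivable_pt_lim P c (P' c)) ->
  (forall c, a <= c <= b -> derivable_pt_lim Q c (Q' c)) ->
  (forall c, a <= c <= b ->
     Rabs (g' c) <= alpha c * beta c /\ 0 <= alpha c /\ 0 <= beta c /\
     rpow (alpha c) p <= P' c /\ rpow (beta c) q <= Q' c) ->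
  0 < P b - P a -> 0 < Q b - Q a ->
  Rabs (g b - g a) <= Rpower (P b - P a) (1 / p) * Rpower (Q b - Q a) (1 / q).
Proof.
  intros Hab Hp Hq Hpq Hg HP HQ Hpt HDP HDQ.
  set (DP := P b - P a) in *; set (DQ := Q b - Q a) in *.
  set (U := Rpower DP (1 / p)); set (V := Rpower DQ (1 / q)).
  assert (HU : 0 < U) by apply Rpower_pos; assert (HV : 0 < V) by apply Rpower_pos.
  assert (HUp : Rpower U p = DP) by (apply Rpower_root; lra).
  assert (HVq : Rpower V q = DQ) by (apply Rpower_root; lra).
  replace (U * V) with (U * V * (P b / (p * DP) + Q b / (q * DQ))
                        - U * V * (P a / (p * DP) + Q a / (q * DQ)))
    by (transitivity (U * V * (1 / p + 1 / q));
        [unfold DP, DQ in *; field; lra | rewrite Hpq; ring]).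
  apply (increment_le_increment g (fun x => U * V * (P x / (p * DP) + Q x / (q * DQ)))
           g' (fun c => U * V * (P' c / (p * DP) + Q' c / (q * DQ))) a b Hab Hg).
  - intros c Hc; apply (derivable_pt_lim_scal (fun x => P x / (p * DP) + Q x / (q * DQ))).
    apply derivable_pt_lim_plus; apply derivable_pt_lim_div_scal; auto.
  - intros c Hc; destruct (Hpt c Hc) as (Hgc & Hal & Hbe & HPc & HQc).
    assert (Hy := young p q (alpha c / U) (beta c / V) Hp Hq Hpq
                    ltac:(apply Rmult_le_pos; [lra | left; apply Rinv_0_lt_compat; lra])
                    ltac:(apply Rmult_le_pos; [lra | left; apply Rinv_0_lt_compat; lra])).
    rewrite !rpow_div_pos, HUp, HVq in Hy by lra.
    assert (Hprod : alpha c * beta c = U * V * (alpha c / U * (beta c / V)))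
      by (field; lra).
    assert (Hyoung : rpow (alpha c) p / DP / p + rpow (beta c) q / DQ / q
                     <= P' c / (p * DP) + Q' c / (q * DQ)).
    { replace (P' c / (p * DP)) with (P' c / DP / p) by (field; lra).
      replace (Q' c / (q * DQ)) with (Q' c / DQ / q) by (field; lra).
      apply Rplus_le_compat; do 2 (apply Rmult_le_compat_r;
        [left; apply Rinv_0_lt_compat; lra |]); assumption. }
    rewrite Hprod in Hgc.
    apply (Rle_trans _ _ _ Hgc), Rmult_le_compat_l; [apply Rmult_le_pos; lra | lra].
Qed.

Lemma ln_le x y : 0 < x -> x <= y -> ln x <= ln y.
Proof. intros Hx [Hxy | <-]; [left; apply ln_increasing | right]; auto. Qed.

(* The exponent [lambda] writing [x = b^lambda a^(1 - lambda)]: a point of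
   [a,b] seen as a geometric interpolation of the endpoints. *)
Definition log_ratio (a b x : R) : R := (ln x - ln a) / (ln b - ln a).

Lemma log_ratio_bounds a b x : 0 < a -> a < b -> a <= x <= b ->
  0 <= log_ratio a b x <= 1.
Proof.
  intros Ha Hab Hx; unfold log_ratio.
  pose proof (ln_increasing a b Ha Hab).
  pose proof (ln_le a x Ha (proj1 Hx)); pose proof (ln_le x b ltac:(lra) (proj2 Hx)).
  split.
  - apply Rmult_le_pos; [lra | left; apply Rinv_0_lt_compat; lra].
  - apply Rmult_le_reg_r with (ln b - ln a); [lra|].
    unfold Rdiv; rewrite Rmult_assoc, Rinv_l; lra.
Qed.

(* GA-convexity of [h] applied to [b] and [a^(1/m)] with [lambda = log_ratio]
   bounds [h] on [a,b], since [b^lambda (a^(1/m))^(m (1 - lambda)) = x]. *)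
Lemma ga_convex_log_bound h a b m x : 0 < a -> a < b -> 0 < m ->
  GA_convex 1 m (Rmax (rpow a (1 / m)) b) h -> a <= x <= b ->
  h x <= log_ratio a b x * h b
         + m * (1 - log_ratio a b x) * h (rpow a (1 / m)).
Proof.
  intros Ha Hab Hm Hconv Hx.
  set (lam := log_ratio a b x).
  assert (Hlam : 0 <= lam <= 1) by (apply log_ratio_bounds; auto).
  assert (Ham : 0 < rpow a (1 / m)) by (rewrite rpow_pos by lra; apply Rpower_pos).
  assert (Hinterp : rpow b lam * rpow (rpow a (1 / m)) (m * (1 - lam)) = x).
  { rewrite !rpow_pos, Rpower_mult by (try apply Rpower_pos; lra).
    unfold Rpower; rewrite <- exp_plus.
    replace (lam * ln b + 1 / m * (m * (1 - lam)) * ln a) with (ln x)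
      by (pose proof (ln_increasing a b Ha Hab); unfold lam, log_ratio; field; lra).
    apply exp_ln; lra. }
  assert (Hlam1 : rpow lam 1 = lam).
  { destruct (Req_EM_T lam 0) as [E|E].
    - rewrite E; apply rpow_0; lra.
    - rewrite rpow_pos by lra; apply Rpower_1; lra. }
  specialize (Hconv b (rpow a (1 / m)) lam).
  rewrite Hinterp, Hlam1 in Hconv.
  apply Hconv; [split; [lra | apply Rmax_r] | split; [lra | apply Rmax_l] | exact Hlam].
Qed.

(* Primitive, for the measure [dx/x], of the interpolation
   [lambda v + (1 - lambda) u] with [lambda = log_ratio a b x]. *)
Definition log_interp_primitive (a b u v x : R) : R :=
  u * (ln x - ln a) + (v - u) / (2 * (ln b - ln a)) * (ln x - ln a) ^ 2.

Lemma log_interp_primitive_derive a b u v c : 0 < a -> a < b -> 0 < c ->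
  derivable_pt_lim (log_interp_primitive a b u v) c
    ((log_ratio a b c * v + (1 - log_ratio a b c) * u) / c).
Proof.
  intros Ha Hab Hc; pose proof (ln_increasing a b Ha Hab).
  apply is_derive_Reals; unfold log_interp_primitive, log_ratio.
  auto_derive; [auto | field; lra].
Qed.

Lemma log_interp_primitive_increment a b u v : 0 < a -> a < b ->
  log_interp_primitive a b u v b - log_interp_primitive a b u v a
  = (ln b - ln a) * (u + v) / 2.
Proof.
  intros Ha Hab; pose proof (ln_increasing a b Ha Hab).
  unfold log_interp_primitive; field; lra.
Qed.

Section WeightedPrimitive.

Variables (f df : R -> R) (a : R).
Hypothesis Hd : forall x, 0 < x -> derivable_pt_lim f x (df x).
Hypothesis Ha : 0 < a.

(* [x^2 f(x) - 2 int_a^x t f(t) dt]; integration by parts says its derivative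
   is [x^2 f'(x)], so the left-hand side of the corollary is half its
   increment over [a,b]. *)
Definition weighted_primitive (x : R) : R :=
  x ^ 2 * f x - 2 * RInt (fun t => t * f t) a x.

Lemma weighted_integrand_continuous z : 0 < z -> continuous (fun t => t * f t) z.
Proof.
  intros Hz; apply continuity_pt_filterlim, derivable_continuous_pt.
  exists (1 * f z + z * df z).
  exact (derivable_pt_lim_mult id f z 1 (df z) (derivable_pt_lim_id z) (Hd z Hz)).
Qed.

Lemma weighted_primitive_derive c : 0 < c ->
  derivable_pt_lim weighted_primitive c (c ^ 2 * df c).
Proof.
  intros Hc.
  assert (HF : is_derive (fun x => RInt (fun t => t * f t) a x) c (c * f c)).
  { apply (is_derive_RInt (fun t => t * f t) _ a).
    - exists (mkposreal (c / 2) ltac:(lra)); intros y Hy.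
      assert (Hyc : Rabs (y - c) < c / 2) by exact Hy; apply Rabs_def2 in Hyc.
      apply (RInt_correct (V := R_CompleteNormedModule)),
            (ex_RInt_continuous (V := R_CompleteNormedModule)).
      intros z [Hz _]; apply weighted_integrand_continuous.
      eapply Rlt_le_trans; [|exact Hz]; apply Rmin_glb_lt; lra.
    - apply weighted_integrand_continuous, Hc. }
  unfold weighted_primitive.
  replace (c ^ 2 * df c) with ((2 * c * f c + c ^ 2 * df c) - 2 * (c * f c)) by ring.
  apply (derivable_pt_lim_minus (fun x => x ^ 2 * f x)
           (fun x => 2 * RInt (fun t => t * f t) a x)).
  - replace (2 * c * f c) with (INR 2 * c ^ Nat.pred 2 * f c) by (simpl; ring).
    apply (derivable_pt_lim_mult (fun x => x ^ 2) f);
      [apply derivable_pt_lim_pow | apply Hd, Hc].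
  - apply (derivable_pt_lim_scal (fun x => RInt (fun t => t * f t) a x)),
      is_derive_Reals, HF.
Qed.

Lemma weighted_primitive_increment b (pr : Riemann_integrable (fun x => x * f x) a b) :
  (b ^ 2 * f b - a ^ 2 * f a) / 2 - RiemannInt pr
  = (weighted_primitive b - weighted_primitive a) / 2.
Proof.
  unfold weighted_primitive; rewrite <- (RInt_Reals _ _ _ pr).
  replace (RInt (fun t => t * f t) a a) with 0
    by (symmetry; exact (RInt_point (V := R_CompleteNormedModule) a _)).
  field.
Qed.

End WeightedPrimitive.

Lemma power_increment_pos a b s : 0 < a -> a < b -> 0 < s ->
  0 < (Rpower b s - Rpower a s) / s.
Proof.
  intros Ha Hab Hs; pose proof (Rlt_Rpower_l a b s Hs ltac:(lra)).
  apply Rdiv_lt_0_compat; lra.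
Qed.

(* The right-hand side of the corollary equals [(1/2) DP^(1/p) DQ^(1/q)] with
   [p = q/(q-1)], [s = 3p], [DP = (b^s - a^s)/s = int_a^b x^s dx/x] and
   [DQ = (ln b - ln a) K / 2], because [L(a^s, b^s) = DP / (ln b - ln a)]. *)
Lemma rhs_closed_form a b q K : 0 < a -> a < b -> 1 < q -> 0 < K ->
  (ln b - ln a) / rpow 2 (1 + 1 / q)
    * rpow (logmean (rpow a (3 * q / (q - 1))) (rpow b (3 * q / (q - 1)))) (1 - 1 / q)
    * rpow K (1 / q)
  = Rpower ((Rpower b (3 * q / (q - 1)) - Rpower a (3 * q / (q - 1))) / (3 * q / (q - 1)))
      (1 / (q / (q - 1)))
    * Rpower ((ln b - ln a) * K / 2) (1 / q) / 2.
Proof.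
  intros Ha Hab Hq HK.
  set (s := 3 * q / (q - 1)).
  assert (Hs : 0 < s) by (apply Rdiv_lt_0_compat; lra).
  set (l := ln b - ln a).
  assert (Hl : 0 < l) by (pose proof (ln_increasing a b Ha Hab); unfold l; lra).
  set (DP := (Rpower b s - Rpower a s) / s).
  assert (HDP : 0 < DP) by (apply power_increment_pos; assumption).
  assert (Hlogmean : logmean (rpow a s) (rpow b s) = DP / l).
  { unfold logmean, DP; rewrite !rpow_pos, !ln_Rpower by lra.
    replace (s * ln b - s * ln a) with (s * l) by (unfold l; ring).
    field; lra. }
  replace (1 / (q / (q - 1))) with (1 - 1 / q) by (field; lra).
  rewrite Hlogmean, !rpow_pos by (try apply Rdiv_lt_0_compat; lra).
  rewrite Rpower_plus, Rpower_1 by lra.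
  rewrite !Rpower_div by first [lra | apply Rmult_lt_0_compat; lra].
  rewrite <- (Rpower_mult_distr l K) by lra.
  assert (Hsplit : Rpower l (1 - 1 / q) * Rpower l (1 / q) = l)
    by (rewrite <- Rpower_plus; replace (1 - 1 / q + 1 / q) with 1 by ring; apply Rpower_1, Hl).
  pose proof (Rpower_pos l (1 - 1 / q)); pose proof (Rpower_pos 2 (1 / q)).
  rewrite <- Hsplit at 1; field; split; apply Rgt_not_eq; assumption.
Qed.

Section Corollary.

Variables (f df : R -> R) (a b m q : R).
Hypothesis Hd : forall x, 0 < x -> derivable_pt_lim f x (df x).
Hypothesis Ha : 0 < a.
Hypothesis Hab : a < b.
Hypothesis Hm : 0 < m.
Hypothesis Hq : 1 < q.
Hypothesis Hconv :
  GA_convex 1 m (Rmax (rpow a (1 / m)) b) (fun x => rpow (Rabs (df x)) q).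

Local Notation A := (rpow (Rabs (df b)) q).
Local Notation B := (rpow (Rabs (df (rpow a (1 / m)))) q).
Local Notation lam := (log_ratio a b).
Local Notation p := (q / (q - 1)).
Local Notation s := (3 * q / (q - 1)).

Lemma endpoint_terms_nonneg : 0 <= A /\ 0 <= m * B.
Proof.
  split; [apply rpow_ge0, Rabs_pos |].
  apply Rmult_le_pos; [lra | apply rpow_ge0, Rabs_pos].
Qed.

Lemma derivative_power_bound c : a <= c <= b ->
  rpow (Rabs (df c)) q <= lam c * A + (1 - lam c) * (m * B).
Proof.
  intros Hc.
  eapply Rle_trans; [exact (ga_convex_log_bound _ a b m c Ha Hab Hm Hconv Hc) | right; ring].
Qed.

(* If [A + m B = 0] then [f'] vanishes on [a,b], so the weighted primitive
   is constant there. *)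
Lemma degenerate_case : A + m * B = 0 ->
  weighted_primitive f a b = weighted_primitive f a a.
Proof.
  intros HK.
  assert (A = 0 /\ m * B = 0) as [HA HmB]
    by (pose proof endpoint_terms_nonneg; lra).
  assert (HB : B = 0) by (destruct (Rmult_integral _ _ HmB); lra).
  assert (Hdf0 : forall c, a <= c <= b -> df c = 0).
  { intros c Hc; pose proof (derivative_power_bound c Hc) as Hbound.
    rewrite HA, HB in Hbound.
    destruct (Req_EM_T (Rabs (df c)) 0) as [E | E]; [exact (Rabs_eq_0 _ E)|].
    rewrite rpow_pos in Hbound by (pose proof (Rabs_pos (df c)); lra).
    pose proof (Rpower_pos (Rabs (df c)) q); lra. }
  apply Rminus_diag_uniq, Rabs_eq_0, Rle_antisym; [| apply Rabs_pos].
  replace 0 with ((fun _ : R => 0) b - (fun _ : R => 0) a) by ring.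
  apply (increment_le_increment _ _ (fun c => c ^ 2 * df c) (fun _ => 0) a b Hab).
  - intros c Hc; apply weighted_primitive_derive; [exact Hd | exact Ha | lra].
  - intros c _; apply derivable_pt_lim_const.
  - intros c Hc; rewrite Hdf0 by exact Hc; rewrite Rmult_0_r, Rabs_R0; lra.
Qed.

Lemma holder_split c : a <= c <= b ->
  let alpha := Rpower c (3 - 1 / p) in
  let beta := Rabs (df c) / Rpower c (1 / q) in
  Rabs (c ^ 2 * df c) <= alpha * beta /\ 0 <= alpha /\ 0 <= beta /\
  rpow alpha p <= Rpower c (s - 1) /\
  rpow beta q <= (lam c * A + (1 - lam c) * (m * B)) / c.
Proof.
  intros Hc alpha beta.
  assert (Hc0 : 0 < c) by lra.
  assert (Hq0 : q <> 0) by lra.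
  pose proof (Rpower_pos c (1 / q)) as Hcq.
  pose proof (Rabs_pos (df c)) as Hdf.
  split; [| split; [| split; [| split]]].
  - right; unfold alpha, beta.
    rewrite Rabs_mult, (Rabs_pos_eq (c ^ 2)) by (apply pow_le; lra).
    rewrite <- (Rpower_pow 2 c) by exact Hc0; simpl INR.
    replace (1 + 1) with ((3 - 1 / p) - 1 / q) by (field; lra).
    unfold Rminus at 1; rewrite Rpower_plus, Rpower_Ropp; field; lra.
  - left; apply Rpower_pos.
  - apply Rmult_le_pos; [exact Hdf | left; apply Rinv_0_lt_compat, Hcq].
  - right; unfold alpha; rewrite rpow_pos, Rpower_mult by apply Rpower_pos.
    f_equal; field; lra.
  - unfold beta; rewrite rpow_div_pos, Rpower_root by (try apply Rpower_pos; lra).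
    unfold Rdiv; apply Rmult_le_compat_r; [left; apply Rinv_0_lt_compat, Hc0|].
    apply derivative_power_bound, Hc.
Qed.

Lemma nondegenerate_case : 0 < A + m * B ->
  Rabs (weighted_primitive f a b - weighted_primitive f a a)
  <= Rpower ((Rpower b s - Rpower a s) / s) (1 / p)
     * Rpower ((ln b - ln a) * (A + m * B) / 2) (1 / q).
Proof.
  intros HK.
  assert (Hs : 0 < s) by (apply Rdiv_lt_0_compat; lra).
  rewrite (Rplus_comm A), <- (log_interp_primitive_increment a b (m * B) A Ha Hab).
  replace ((Rpower b s - Rpower a s) / s) with (Rpower b s / s - Rpower a s / s)
    by (field; lra).
  apply (holder_by_primitives (weighted_primitive f a) (fun x => Rpower x s / s)
           (log_interp_primitive a b (m * B) A) (fun c => c ^ 2 * df c) (fun c => Rpower c (s - 1))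
           (fun c => (lam c * A + (1 - lam c) * (m * B)) / c)
           (fun c => Rpower c (3 - 1 / p)) (fun c => Rabs (df c) / Rpower c (1 / q))).
  - exact Hab.
  - apply Rdiv_lt_0_compat; lra.
  - lra.
  - field; lra.
  - intros c Hc; apply weighted_primitive_derive; [exact Hd | exact Ha | lra].
  - intros c Hc.
    replace (Rpower c (s - 1)) with (s * Rpower c (s - 1) / s) by (field; lra).
    apply derivable_pt_lim_div_scal, derivable_pt_lim_power; lra.
  - intros c Hc; apply log_interp_primitive_derive; lra.
  - intros c Hc; exact (holder_split c Hc).
  - replace (Rpower b s / s - Rpower a s / s) with ((Rpower b s - Rpower a s) / s)
      by (field; lra).
    apply power_increment_pos; assumption.
  - rewrite log_interp_primitive_increment by assumption.
    pose proof (ln_increasing a b Ha Hab).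
    apply Rdiv_lt_0_compat; [apply Rmult_lt_0_compat|]; lra.
Qed.

End Corollary.

Theorem corollary3p4 (f df : R -> R) (a b m q : R)
  (Hd0 : right_derivative f 0 (df 0))
  (Hd : forall x, 0 < x -> derivable_pt_lim f x (df x))
  (Ha : 0 < a) (Hab : a < b)
  (Hm : 0 < m <= 1) (Hq : 1 < q)
  (Hconv : GA_convex 1 m (Rmax (rpow a (1 / m)) b) (fun x => rpow (Rabs (df x)) q))
  (pr : Riemann_integrable (fun x => x * f x) a b) :
  Rabs ((b ^ 2 * f b - a ^ 2 * f a) / 2 - RiemannInt pr)
    <= (ln b - ln a) / rpow 2 (1 + 1 / q)
       * rpow (logmean (rpow a (3 * q / (q - 1))) (rpow b (3 * q / (q - 1)))) (1 - 1 / q)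
       * rpow (rpow (Rabs (df b)) q + m * rpow (Rabs (df (rpow a (1 / m)))) q) (1 / q).
Proof.
  rewrite (weighted_primitive_increment f a b pr), Rabs_div, (Rabs_pos_eq 2) by lra.
  set (K := rpow (Rabs (df b)) q + m * rpow (Rabs (df (rpow a (1 / m)))) q).
  assert (HK : 0 <= K)
    by (pose proof (endpoint_terms_nonneg df a b m q (proj1 Hm)); unfold K; lra).
  destruct HK as [HK | HK].
  - rewrite rhs_closed_form by (try exact HK; lra).
    apply Rmult_le_compat_r; [lra|].
    exact (nondegenerate_case f df a b m q Hd Ha Hab (proj1 Hm) Hq Hconv HK).
  - rewrite (degenerate_case f df a b m q Hd Ha Hab (proj1 Hm) Hconv (eq_sym HK)),
      <- HK, rpow_0 by (apply Rgt_not_eq, Rdiv_lt_0_compat; lra).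
    rewrite Rminus_diag, Rabs_R0; lra.
Qed.
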